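(* Let $p=4k+1$ be a prime, let $J(k)=\sum_{i=1}^{4k-2}\big(\frac{i(i+1)(i+2)}{p}\big)$, let $S\subset\mathbb{P}^5$ be the surface over $\mathbb{F}_p$ defined by $x_1^2-x_2^2=x_3^2$, $x_0^2-x_1^2=x_4^2$, $x_0^2-x_2^2=x_5^2$, let $M_p$ be the number of solutions $(x,y,z)\in\mathbb{F}_p^3$ of $z^2=(x^2y^2+1)(x^2+y^2)$, and let $N_p$ be the number of solutions $(x,y)\in\mathbb{F}_p^2$ of $y^2=x^3-x$. Then $$|S(\mathbb{F}_p)|=(p+1)^2+J(k)^2\quad\text{if and only if}\quad M_p=(p+1)^2+(N_p-p)^2+1=(p+1)^2+J(k)^2+1.$$
   Context: $\big(\frac{a}{p}\big)$ is the Legendre symbol. *)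

From mathcomp Require Import all_boot all_algebra.
Set Implicit Arguments. Unset Strict Implicit. Unset Printing Implicit Defensive.
Import GRing.Theory.
Local Open Scope ring_scope.

Definition legendre (a : int) (p : nat) : int :=
  if (p%:Z %| a)%Z then 0
  else if [exists x : 'I_p, (p%:Z %| (x%:Z) ^+ 2 - a)%Z] then 1 else -1.

Definition J (k : nat) : int :=
  \sum_(1 <= i < (4 * k - 2).+1) legendre ((i * i.+1 * i.+2)%N%:Z) (4 * k + 1).

(* Number of F_p-points of S in P^5: nonzero solutions in F_p^6 of the
   homogeneous equations, divided by |F_p^*| = p - 1 (the set is closed
   under scaling, so this counts the projective points exactly). *)
Definition S_eqs (p : nat) (x : {ffun 'I_6 -> 'F_p}) : bool :=
  [&& x (inord 1) ^+ 2 - x (inord 2) ^+ 2 == x (inord 3) ^+ 2,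
      x (inord 0) ^+ 2 - x (inord 1) ^+ 2 == x (inord 4) ^+ 2 &
      x (inord 0) ^+ 2 - x (inord 2) ^+ 2 == x (inord 5) ^+ 2].

Definition S_count (p : nat) : nat :=
  (#|[set x : {ffun 'I_6 -> 'F_p} | [exists i, x i != 0%R] && S_eqs x]| %/ p.-1)%N.

Definition M_count (p : nat) : nat :=
  #|[set t : 'F_p * 'F_p * 'F_p |
      t.2 ^+ 2 == (t.1.1 ^+ 2 * t.1.2 ^+ 2 + 1) * (t.1.1 ^+ 2 + t.1.2 ^+ 2)]|.

Definition N_count (p : nat) : nat :=
  #|[set t : 'F_p * 'F_p | t.2 ^+ 2 == t.1 ^+ 3 - t.1]|.

From mathcomp Require Import all_boot all_algebra all_field all_solvable.
From mathcomp Require Import ring zify.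
Set Implicit Arguments. Unset Strict Implicit. Unset Printing Implicit Defensive.
Import GRing.Theory Num.Theory.
Local Open Scope ring_scope.

(* Each count is a character sum for the quadratic character qchar of F_q, since
   y^2 = x has 1 + qchar x solutions.  With a = sum_x qchar (x^3 - x) this gives
   N_p = p + a at once, and J(k) = a after a shift of index (the omitted terms vanish).
   Substituting y -> i y with i^2 = -1 turns M_p into p^2 plus the double sum of
   qchar ((1 - x^2 y^2) (x^2 - y^2)); putting x = y v splits it into qchar (v^2 - 1)
   times the sum over y != 0 of qchar (1 - v^2 y^4), which is qchar v * a - 2; the
   whole double sum is a^2 + 2p + 2.
   The affine cone over S is counted slice by slice in x0: a slice with x0 != 0 scales
   to x0 = 1, where the two conics x0^2 - x_i^2 = square are rationally parametrized and
   the last equation produces the same character sum.  Hence |S(F_p)| = (p + 1)^2 + a^2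
   and M_p = (p + 1)^2 + a^2 + 1, so both sides of the equivalence hold. *)


Lemma card_set_sum (T : finType) (P : pred T) :
  #|[set x | P x]|%:R = \sum_x (P x)%:R :> int.
Proof.
by rewrite -sum1dep_card natr_sum big_mkcond; apply: eq_bigr => x _; case: (P x).
Qed.

Lemma card_set_pair (T1 T2 : finType) (P : T1 -> T2 -> bool) :
  #|[set t : T1 * T2 | P t.1 t.2]|%:R = \sum_u #|[set z | P u z]|%:R :> int.
Proof.
rewrite card_set_sum -(pair_bigA _ (fun u z => (P u z)%:R)) /=.
by apply: eq_bigr => u _; rewrite card_set_sum.
Qed.

Definition ffun6 (T : Type) (t : T * T * T * T * T * T) : {ffun 'I_6 -> T} :=
  let: (x0, x1, x2, x3, x4, x5) := t in [ffun i => tnth [tuple x0; x1; x2; x3; x4; x5] i].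

Definition ffun6_inv (T : Type) (f : {ffun 'I_6 -> T}) : T * T * T * T * T * T :=
  (f (inord 0), f (inord 1), f (inord 2), f (inord 3), f (inord 4), f (inord 5)).

Lemma ffun6K (T : Type) : cancel (@ffun6 T) (@ffun6_inv T).
Proof.
by move=> [[[[[x0 x1] x2] x3] x4] x5]; rewrite /ffun6_inv !ffunE !(tnth_nth x0) !inordK.
Qed.

Lemma ffun6_invK (T : Type) : cancel (@ffun6_inv T) (@ffun6 T).
Proof.
move=> f; apply/ffunP => i; rewrite ffunE (tnth_nth (f i)).
by case: i => [[|[|[|[|[|[|m]]]]]] Hi] //=; congr (f _); apply: val_inj; rewrite /= inordK.
Qed.

Lemma sum_ffun6 (R : nmodType) (T : finType) (g : {ffun 'I_6 -> T} -> R) :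
  \sum_f g f =
  \sum_x0 \sum_x1 \sum_x2 \sum_x3 \sum_x4 \sum_x5 g (ffun6 (x0, x1, x2, x3, x4, x5)).
Proof.
rewrite (reindex (@ffun6 T)); last first.
  by exists (@ffun6_inv T) => t _; [apply: ffun6K | apply: ffun6_invK].
by rewrite !pair_bigA; apply: eq_bigr => [[[[[[x0 x1] x2] x3] x4] x5]].
Qed.

Section QuadraticCharacter.

Variable F : finFieldType.
Hypothesis F_odd : odd #|F|.
Local Notation q := #|F|.
Local Notation h := #|F|./2.

Let q_gt1 : (1 < q)%N := finNzRing_gt1 F.

Lemma two_neq0 : (2 : F) != 0.
Proof.
apply: contraTneq F_odd => two0.
have pchar2 : 2%N \in [pchar F] by rewrite inE two0 eqxx.
have [e] := p_natP (abelem_pgroup (fin_ring_pchar_abelem pchar2)).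
rewrite cardsT; change (q = (2 ^ e)%N -> ~~ odd q).
case: e => [|e] cardF; last by rewrite cardF oddX.
by have := q_gt1; rewrite cardF.
Qed.

Lemma expf_card_pred (x : F) : x != 0 -> x ^+ q.-1 = 1.
Proof.
move=> x0; apply: (mulfI x0); rewrite mulr1 -exprS prednK ?expf_card //.
exact: ltnW q_gt1.
Qed.

Lemma expf_half_sqr (y : F) : y != 0 -> (y ^+ 2) ^+ h = 1.
Proof. by move=> y0; rewrite -exprM mulnC muln2 odd_halfK // expf_card_pred. Qed.

Lemma expf_half (x : F) : x != 0 -> x ^+ h = 1 \/ x ^+ h = -1.
Proof.
move=> x0; have : (x ^+ h) ^+ 2 == 1 by rewrite -exprM mulnC exprM expf_half_sqr.
by rewrite sqrf_eq1 => /orP [] /eqP; [left | right].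
Qed.

Lemma N1_neq1 : (-1 : F) != 1.
Proof. by rewrite -subr_eq0 -opprD oppr_eq0; exact: two_neq0. Qed.

Definition qchar (x : F) : int := if x == 0 then 0 else if x ^+ h == 1 then 1 else -1.

Lemma qchar0 : qchar 0 = 0. Proof. by rewrite /qchar eqxx. Qed.

Lemma qchar1 : qchar 1 = 1. Proof. by rewrite /qchar oner_eq0 expr1n eqxx. Qed.

Lemma qchar_sign (x : F) : x != 0 -> qchar x = 1 \/ qchar x = -1.
Proof. by rewrite /qchar => /negbTE ->; case: ifP; [left | right]. Qed.

Lemma qcharM (x y : F) : qchar (x * y) = qchar x * qchar y.
Proof.
rewrite /qchar mulf_eq0; have [-> | x0] /= := eqVneq x 0; first by rewrite mul0r.
have [_ | y0] := eqVneq y 0; first by rewrite mulr0.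
rewrite exprMn; case: (expf_half x0) => ->; case: (expf_half y0) => ->;
  by rewrite !(mulr1, mul1r, mulrNN, eqxx, (negbTE N1_neq1)).
Qed.

Lemma qchar_sqr (x : F) : x != 0 -> qchar (x ^+ 2) = 1.
Proof.
by move=> x0; rewrite /qchar sqrf_eq0 (negbTE x0) expf_half_sqr // eqxx.
Qed.

Lemma qcharV (x : F) : qchar x^-1 = qchar x.
Proof.
have [-> | x0] := eqVneq x 0; first by rewrite invr0.
have : qchar x * qchar x^-1 = 1 by rewrite -qcharM mulfV // qchar1.
by case: (qchar_sign x0) => ->; rewrite ?mul1r // mulN1r => /eqP; rewrite eqr_oppLR => /eqP.
Qed.

Definition nsqrt (x : F) : nat := #|[set y : F | y ^+ 2 == x]|.

Lemma nsqrt0 : nsqrt 0 = 1%N.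
Proof.
rewrite /nsqrt (_ : [set y | _] = [set 0]) ?cards1 //.
by apply/setP => y; rewrite !inE sqrf_eq0.
Qed.

Lemma nsqrt_sqr (y : F) : y != 0 -> nsqrt (y ^+ 2) = 2%N.
Proof.
move=> y0; rewrite /nsqrt (_ : [set z | _] = [set y; - y]); last first.
  by apply/setP => z; rewrite !inE eqf_sqr.
rewrite cards2; suff -> : y != - y by [].
by rewrite -subr_eq0 opprK -mulr2n -mulr_natl mulf_neq0 ?two_neq0.
Qed.

Lemma nsqrt_neq0 (x : F) : x != 0 -> nsqrt x = 0%N \/ nsqrt x = 2%N.
Proof.
move=> x0; have [-> | /card_gt0P [y]] := posnP (nsqrt x); first by left.
rewrite inE => /eqP yx; right; rewrite -yx nsqrt_sqr //.
by apply: contraNneq x0 => y0; rewrite -yx y0 expr0n.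
Qed.

Lemma sum_sqr (g : F -> int) : \sum_y g (y ^+ 2) = \sum_x (nsqrt x)%:R * g x.
Proof.
under [RHS]eq_bigr => x _ do rewrite /nsqrt card_set_sum mulr_suml.
rewrite exchange_big; apply: eq_bigr => y _.
rewrite (bigD1 (y ^+ 2)) //= eqxx mul1r big1 ?addr0 // => x /negbTE.
by rewrite eq_sym => ->; rewrite mul0r.
Qed.

Lemma nsqrt_sum (x : F) : (nsqrt x)%:R = \sum_y (x == y ^+ 2)%:R :> int.
Proof. by rewrite card_set_sum; apply: eq_bigr => y _; rewrite eq_sym. Qed.

Lemma sum_nsqrt : \sum_x (nsqrt x)%:R = q%:R :> int.
Proof.
have := sum_sqr (fun=> 1); rewrite sumr_const => ->.
by apply: eq_bigr => x _; rewrite mulr1.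
Qed.

Lemma card_nonzero_squares : #|[set x : F | (x != 0) && (0 < nsqrt x)%N]| = h.
Proof.
set Q := [set x | _].
have : q = (1 + 2 * #|Q|)%N.
  apply/eqP; rewrite -(eqr_nat int) natrD natrM mulr1n -sum_nsqrt card_set_sum; apply/eqP.
  rewrite mulr_sumr (bigD1 0) //= nsqrt0 [in RHS](bigD1 0) //=.
  rewrite eqxx mulr0 add0r; congr (_ + _); apply: eq_bigr => x x0; rewrite x0 /=.
  by case: (nsqrt_neq0 x0) => ->; rewrite ?mulr0 ?mulr1.
have := odd_halfK F_odd; lia.
Qed.

Lemma euler_criterion (x : F) : x ^+ h = 1 -> exists y, y ^+ 2 = x.
Proof.
move=> xh; set Q := [set x : F | (x != 0) && (0 < nsqrt x)%N].
pose U := [set z : F | z ^+ h == 1].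
have QU : Q \subset U.
  apply/subsetP => z; rewrite !inE => /andP [z0 /card_gt0P [y]]; rewrite inE => /eqP yz.
  by rewrite -yz expf_half_sqr // -sqrf_eq0 yz.
have UQ : (#|U| <= #|Q|)%N.
  rewrite card_nonzero_squares cardE max_unity_roots ?enum_uniq //.
    by have := q_gt1; lia.
  by apply/allP => z; rewrite mem_enum inE unity_rootE.
have : x \in Q.
  suff -> : Q = U by rewrite inE xh.
  by apply/eqP; rewrite eqEcard QU.
by rewrite inE => /andP [_ /card_gt0P [y]]; rewrite inE => /eqP; exists y.
Qed.

Lemma nsqrtE (x : F) : (nsqrt x)%:R = 1 + qchar x :> int.
Proof.
have [-> | x0] := eqVneq x 0; first by rewrite nsqrt0 qchar0.
rewrite /qchar (negbTE x0); case: (expf_half x0) => xh; rewrite xh ?eqxx.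
  have [y yx] := euler_criterion xh; rewrite -yx nsqrt_sqr //.
  by rewrite -sqrf_eq0 yx.
rewrite (negbTE N1_neq1) subrr; case: (nsqrt_neq0 x0) => [-> // | nsqrt2].
have /card_gt0P [y] : (0 < nsqrt x)%N by rewrite nsqrt2.
rewrite inE => /eqP yx; move: xh; rewrite -yx expf_half_sqr; last by rewrite -sqrf_eq0 yx.
by move/eqP; rewrite eq_sym (negbTE N1_neq1).
Qed.

Lemma qchar_nonzero (x : F) :
  x != 0 -> qchar x = if [exists y, y ^+ 2 == x] then 1 else -1.
Proof.
move=> x0; apply: (addrI 1); rewrite -nsqrtE.
have -> : [exists y, y ^+ 2 == x] = (0 < nsqrt x)%N.
  by apply/existsP/card_gt0P => -[y]; rewrite ?inE; exists y; rewrite ?inE.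
by case: (nsqrt_neq0 x0) => ->; rewrite ?subrr.
Qed.

Lemma qchar_sqrM (c x : F) : c != 0 -> qchar (c ^+ 2 * x) = qchar x.
Proof. by move=> c0; rewrite qcharM qchar_sqr // mul1r. Qed.

Lemma nsqrt_sqrM (c x : F) : c != 0 -> nsqrt (c ^+ 2 * x) = nsqrt x.
Proof. by move=> c0; apply/eqP; rewrite -(eqr_nat int) !nsqrtE qchar_sqrM. Qed.

Lemma sum_nonzero_const (c : int) : \sum_(x : F | x != 0) c = (q%:R - 1) * c.
Proof.
rewrite sumr_const (eq_card (B := predC1 0)) // cardC1 -[c *+ _]mulr_natl.
by rewrite -subn1 natrB //; exact: ltnW q_gt1.
Qed.

Lemma sum_scale (c : F) (g : F -> int) : c != 0 -> \sum_x g (c * x) = \sum_x g x.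
Proof. by move=> c0; rewrite [RHS](reindex_inj (mulfI c0)). Qed.

Lemma sum_scale_nonzero (c : F) (g : F -> int) : c != 0 ->
  \sum_(x | x != 0) g (c * x) = \sum_(x | x != 0) g x.
Proof.
move=> c0; rewrite [RHS](reindex_inj (mulfI c0)) /=.
by apply: eq_bigl => x; rewrite mulf_eq0 (negbTE c0).
Qed.

Definition hyperbola_x (n : F) : F := (n ^+ 2 + 1) / (2 * n).

(* The points (x, y) of the conic x^2 - y^2 = 1 are parametrized by n = x + y != 0. *)
Lemma sum_nsqrt_hyperbola (g : F -> int) :
  \sum_x (nsqrt (x ^+ 2 - 1))%:R * g x = \sum_(n | n != 0) g (hyperbola_x n).
Proof.
under eq_bigr => x _ do rewrite /nsqrt card_set_sum mulr_suml (reindex_inj (subIr x)) /=.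
rewrite exchange_big /= [RHS]big_mkcond /=; apply: eq_bigr => n _.
have [-> | n0] := eqVneq n 0.
  apply: big1 => x _; rewrite sub0r sqrrN -subr_eq0 opprB addrC subrK oner_eq0.
  by rewrite mul0r.
rewrite (bigD1 (hyperbola_x n)) //= big1 ?addr0 => [|x xn].
  suff -> : (n - hyperbola_x n) ^+ 2 == hyperbola_x n ^+ 2 - 1 by rewrite mul1r.
  by apply/eqP; rewrite /hyperbola_x; field; rewrite n0 two_neq0.
suff /negbTE -> : (n - x) ^+ 2 != x ^+ 2 - 1 by rewrite mul0r.
apply: contra xn => /eqP nx; apply/eqP; rewrite /hyperbola_x.
have : n ^+ 2 + 1 - x * (2 * n) = 0 by rewrite -(subrr (x ^+ 2 - 1)) -{1}nx; ring.
by move/eqP; rewrite subr_eq0 => /eqP ->; rewrite mulfK // mulf_neq0 ?two_neq0.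
Qed.

Lemma sum_qchar_sqrB1 : \sum_x qchar (x ^+ 2 - 1) = -1.
Proof.
have := sum_nsqrt_hyperbola (fun=> 1); under eq_bigr do rewrite mulr1 nsqrtE.
rewrite big_split sumr_const sum_nonzero_const mulr1 /= => E.
by apply: (addrI q%:R); rewrite E; ring.
Qed.

Definition cubic_sum : int := \sum_x qchar (x ^+ 3 - x).

Lemma card_cubic :
  #|[set t : F * F | t.2 ^+ 2 == t.1 ^+ 3 - t.1]|%:R = q%:R + cubic_sum :> int.
Proof.
rewrite (card_set_pair (fun x z : F => z ^+ 2 == x ^+ 3 - x)).
under eq_bigr do rewrite -/(nsqrt _) nsqrtE.
by rewrite big_split sumr_const.
Qed.

Section OneModFour.

Hypothesis F_1mod4 : #|F| = 1 %[mod 4].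
Local Notation a := cubic_sum.

Lemma qcharN1 : qchar (-1) = 1.
Proof.
rewrite /qchar oppr_eq0 oner_eq0 -signr_odd (_ : odd h = false) ?eqxx //.
by move: F_1mod4; rewrite -divn2; lia.
Qed.

Lemma qcharN (x : F) : qchar (- x) = qchar x.
Proof. by rewrite -mulN1r qcharM qcharN1 mul1r. Qed.

Lemma nsqrtN (x : F) : nsqrt (- x) = nsqrt x.
Proof. by apply/eqP; rewrite -(eqr_nat int) !nsqrtE qcharN. Qed.

Lemma sqrtN1 : exists i : F, i ^+ 2 = -1.
Proof.
apply: euler_criterion; move: qcharN1; rewrite /qchar oppr_eq0 oner_eq0.
by case: eqP.
Qed.

Lemma sum_qchar_1subsqr : \sum_x qchar (1 - x ^+ 2) = -1.
Proof. by rewrite -sum_qchar_sqrB1; apply: eq_bigr => x _; rewrite -qcharN opprB. Qed.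

Lemma sum_qchar_subsqr (c : F) :
  c != 0 -> \sum_(x | x != 0) qchar (c ^+ 2 - x ^+ 2) = -2.
Proof.
move=> c0; have : \sum_x qchar (c ^+ 2 - x ^+ 2) = -1.
  rewrite -(sum_scale _ c0) -sum_qchar_1subsqr; apply: eq_bigr => x _.
  by rewrite exprMn -{1}(mulr1 (c ^+ 2)) -mulrBr qchar_sqrM.
by rewrite (bigD1 0) //= expr0n subr0 qchar_sqr // => E; apply: (addrI 1); rewrite E.
Qed.

Definition quartic_char (x y : F) : int := qchar ((1 - x ^+ 2 * y ^+ 2) * (x ^+ 2 - y ^+ 2)).

Lemma sum_qchar_mul_1subsqr (v : F) : v != 0 ->
  \sum_s qchar s * qchar (1 - v ^+ 2 * s ^+ 2) = qchar v * a.
Proof.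
move=> v0; have vV0 : v^-1 != 0 by rewrite invr_eq0.
rewrite -(sum_scale _ vV0) /cubic_sum mulr_sumr; apply: eq_bigr => x _.
have -> : 1 - v ^+ 2 * (v^-1 * x) ^+ 2 = - (x ^+ 2 - 1) by field.
by rewrite qcharN !qcharM qcharV -mulrA; congr (_ * _); rewrite -qcharM; congr qchar; ring.
Qed.

Lemma sum_qchar_1sub_quartic (v : F) : v != 0 ->
  \sum_(y | y != 0) qchar (1 - v ^+ 2 * (y ^+ 2) ^+ 2) = qchar v * a - 2.
Proof.
move=> v0; have : \sum_y qchar (1 - v ^+ 2 * (y ^+ 2) ^+ 2) = -1 + qchar v * a.
  rewrite (sum_sqr (fun s => qchar (1 - v ^+ 2 * s ^+ 2))).
  under eq_bigr do rewrite nsqrtE mulrDl mul1r.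
  rewrite big_split /= sum_qchar_mul_1subsqr // -sum_qchar_1subsqr; congr (_ + _).
  by rewrite -[RHS](sum_scale _ v0); apply: eq_bigr => s _; rewrite exprMn.
rewrite (bigD1 (0 : F)) //= !expr0n /= mulr0 subr0 qchar1 => E.
by apply: (addrI 1); rewrite E; ring.
Qed.

Lemma sum_quartic_char_nonzero :
  \sum_(y | y != 0) \sum_(x | x != 0) quartic_char x y = a ^+ 2 + 4.
Proof.
transitivity (\sum_(y | y != 0) \sum_(v | v != 0)
    qchar (v ^+ 2 - 1) * qchar (1 - v ^+ 2 * (y ^+ 2) ^+ 2)).
  apply: eq_bigr => y y0; rewrite -(sum_scale_nonzero _ y0); apply: eq_bigr => v _.
  rewrite /quartic_char -qcharM -[RHS](qchar_sqrM _ y0); congr qchar; ring.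
rewrite exchange_big /=.
under eq_bigr => v v0 do rewrite -mulr_sumr sum_qchar_1sub_quartic // mulrBr mulrA -qcharM.
rewrite sumrB -!mulr_suml.
have -> : \sum_(v | v != 0) qchar ((v ^+ 2 - 1) * v) = a.
  rewrite /cubic_sum [RHS](bigD1 0) //= expr0n subrr qchar0 add0r.
  by apply: eq_bigr => v _; congr qchar; ring.
have -> : \sum_(v | v != 0) qchar (v ^+ 2 - 1) = -2.
  rewrite -(sum_qchar_subsqr (oner_neq0 F)); apply: eq_bigr => v _.
  by rewrite -qcharN opprB expr1n.
ring.
Qed.

Lemma sum_quartic_char : \sum_x \sum_y quartic_char x y = a ^+ 2 + 2 * q%:R + 2.
Proof.
rewrite (bigD1 0) //=.
have -> : \sum_y quartic_char 0 y = q%:R - 1.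
  rewrite (bigD1 0) //= /quartic_char expr0n /= subrr mulr0 qchar0 add0r.
  rewrite -[RHS]mulr1 -sum_nonzero_const; apply: eq_bigr => y y0.
  by rewrite /= mul0r subr0 mul1r sub0r qcharN qchar_sqr.
transitivity (q%:R - 1 + \sum_(x | x != 0) (1 + \sum_(y | y != 0) quartic_char x y)).
  congr (_ + _); apply: eq_bigr => x x0; rewrite (bigD1 0) //= /quartic_char.
  by rewrite expr0n mulr0 !subr0 mul1r qchar_sqr.
by rewrite big_split /= sum_nonzero_const mulr1 exchange_big /= sum_quartic_char_nonzero; ring.
Qed.

Lemma card_quartic_surface :
  #|[set t : F * F * F |
      t.2 ^+ 2 == (t.1.1 ^+ 2 * t.1.2 ^+ 2 + 1) * (t.1.1 ^+ 2 + t.1.2 ^+ 2)]|%:R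
  = (q.+1)%:R ^+ 2 + a ^+ 2 + 1 :> int.
Proof.
rewrite (card_set_pair (fun (u : F * F) z =>
  z ^+ 2 == (u.1 ^+ 2 * u.2 ^+ 2 + 1) * (u.1 ^+ 2 + u.2 ^+ 2))).
rewrite -(pair_bigA _ (fun x y => (nsqrt ((x ^+ 2 * y ^+ 2 + 1) * (x ^+ 2 + y ^+ 2)))%:R)) /=.
have [i i2] := sqrtN1; have i0 : i != 0 by rewrite -sqrf_eq0 i2 oppr_eq0 oner_eq0.
transitivity (\sum_x \sum_y (1 + quartic_char x y)).
  apply: eq_bigr => x _; rewrite -(sum_scale _ i0); apply: eq_bigr => y _.
  by rewrite nsqrtE /quartic_char exprMn i2; congr (1 + qchar _); ring.
under eq_bigr do rewrite big_split /= sumr_const.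
by rewrite big_split /= sumr_const sum_quartic_char -natr1 -mulr_natl; ring.
Qed.

Definition cone_slice (x0 : F) : int :=
  \sum_x1 \sum_x2 (nsqrt (x1 ^+ 2 - x2 ^+ 2))%:R * (nsqrt (x0 ^+ 2 - x1 ^+ 2))%:R
                 * (nsqrt (x0 ^+ 2 - x2 ^+ 2))%:R.

Lemma cone_slice0 : cone_slice 0 = 4 * (q%:R - 1) ^+ 2 + 1.
Proof.
have nsqrt_Nsqr (x : F) : (nsqrt (0 ^+ 2 - x ^+ 2))%:R = if x == 0 then 1 else 2 :> int.
  rewrite expr0n /= sub0r nsqrtN.
  by have [-> | x0] := eqVneq x 0; rewrite ?expr0n ?nsqrt0 ?nsqrt_sqr.
rewrite /cone_slice (bigD1 0) //=; under eq_bigr do rewrite !nsqrt_Nsqr eqxx mulr1.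
rewrite (bigD1 0) //= eqxx.
have -> : \sum_(x : F | x != 0) (if x == 0 then 1 else 2) * (if x == 0 then 1 else 2) =
    (q%:R - 1 : int) * 4.
  by rewrite -sum_nonzero_const; apply: eq_bigr => x /negbTE ->.
have -> : \sum_(x1 : F | x1 != 0) \sum_x2 (nsqrt (x1 ^+ 2 - x2 ^+ 2))%:R *
    (nsqrt (0 ^+ 2 - x1 ^+ 2))%:R * (nsqrt (0 ^+ 2 - x2 ^+ 2))%:R
    = (q%:R - 1 : int) * (4 * q%:R - 8).
  rewrite -sum_nonzero_const; apply: eq_bigr => x1 x10.
  rewrite (bigD1 0) //= !nsqrt_Nsqr eqxx (negbTE x10).
  under eq_bigr => x2 x20 do rewrite nsqrt_Nsqr (negbTE x20) nsqrtE.
  rewrite expr0n /= subr0 nsqrt_sqr // -!mulr_suml big_split /= sum_nonzero_const.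
  by rewrite sum_qchar_subsqr //; ring.
ring.
Qed.

Lemma qchar_hyperbola_xB (m n : F) : m != 0 -> n != 0 ->
  qchar (hyperbola_x m ^+ 2 - hyperbola_x n ^+ 2) = quartic_char m n.
Proof.
move=> m0 n0; have mn0 : 2 * m * n != 0 by rewrite !mulf_neq0 ?two_neq0.
rewrite /quartic_char -qcharN -(qchar_sqrM _ mn0) /hyperbola_x; congr qchar.
by field; rewrite two_neq0 m0 n0.
Qed.

Lemma cone_slice_nonzero (x0 : F) :
  x0 != 0 -> cone_slice x0 = (q%:R - 1) ^+ 2 + a ^+ 2 + 4.
Proof.
move=> x00; have x0B (y : F) : x0 ^+ 2 - (x0 * y) ^+ 2 = x0 ^+ 2 * - (y ^+ 2 - 1) by ring.
transitivity (\sum_(y1 : F) \sum_(y2 : F) (nsqrt (y1 ^+ 2 - 1))%:R *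
    ((nsqrt (y2 ^+ 2 - 1))%:R * (nsqrt (y1 ^+ 2 - y2 ^+ 2))%:R : int)).
  rewrite /cone_slice -(sum_scale _ x00); apply: eq_bigr => y1 _.
  rewrite -(sum_scale _ x00); apply: eq_bigr => y2 _.
  by rewrite !x0B !exprMn -mulrBr !nsqrt_sqrM // !nsqrtN; ring.
transitivity (\sum_(n : F | n != 0) \sum_(m : F | m != 0) (1 + quartic_char m n)).
  under eq_bigr do
    rewrite -mulr_sumr (sum_nsqrt_hyperbola (fun y2 => (nsqrt (_ - y2 ^+ 2))%:R)) mulr_sumr.
  rewrite exchange_big /=; apply: eq_bigr => n n0.
  rewrite (sum_nsqrt_hyperbola (fun y1 => (nsqrt (y1 ^+ 2 - _))%:R)); apply: eq_bigr => m m0.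
  by rewrite nsqrtE qchar_hyperbola_xB.
under eq_bigr do rewrite big_split /= sum_nonzero_const mulr1.
by rewrite big_split /= sum_nonzero_const sum_quartic_char_nonzero; ring.
Qed.

Lemma sum_cone_slice :
  \sum_x0 cone_slice x0 = 1 + (q%:R - 1) * ((q.+1)%:R ^+ 2 + a ^+ 2).
Proof.
rewrite (bigD1 0) //= cone_slice0 (eq_bigr _ cone_slice_nonzero) sum_nonzero_const -natr1.
ring.
Qed.

End OneModFour.

End QuadraticCharacter.

Section PrimeField.

Variables p k : nat.
Hypothesis p_pr : prime p.
Hypothesis pE : p = (4 * k + 1)%N.

Lemma Fp_odd : odd #|'F_p|.
Proof. by rewrite card_Fp // pE oddD oddM. Qed.

Lemma Fp_1mod4 : #|'F_p| = 1 %[mod 4].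
Proof. by rewrite card_Fp // pE; lia. Qed.

Lemma legendre_qchar (n : nat) : legendre n p = qchar (n%:R : 'F_p).
Proof.
have Fp_char := pchar_Fp p_pr.
have sqr_mod (x : 'I_p) : (p%:Z %| x%:Z ^+ 2 - n%:Z)%Z = ((x%:R : 'F_p) ^+ 2 == n%:R).
  by rewrite (dvdz_pcharf Fp_char) rmorphB rmorphXn /= subr_eq0.
have p_dvd : (p%:Z %| n%:Z)%Z = (n%:R == 0 :> 'F_p) by rewrite -(dvdn_pcharf Fp_char).
rewrite /legendre p_dvd (eq_existsb sqr_mod).
have [-> | n0] := eqVneq (n%:R : 'F_p) 0; first by rewrite qchar0.
rewrite (qchar_nonzero Fp_odd n0); congr (if _ then _ else _).
apply/existsP/existsP => -[x x2]; first by exists x%:R.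
have xp : (val x < p)%N by rewrite -[X in (_ < X)%N](Fp_cast p_pr) ltn_ord.
by exists (Ordinal xp); rewrite natr_Zp.
Qed.

Lemma J_cubic_sum : J k = cubic_sum 'F_p.
Proof.
pose g (x : 'F_p) := qchar (x ^+ 3 - x).
have -> : cubic_sum 'F_p = \sum_(0 <= i < p) g i%:R.
  rewrite /cubic_sum (_ : index_iota 0 p = index_iota 0 (Zp_trunc (pdiv p)).+2).
    by rewrite big_mkord; apply: eq_bigr => x _; rewrite natr_Zp.
  by rewrite Fp_cast.
have pE3 : p = (4 * k - 2).+3 by have := prime_gt1 p_pr; rewrite pE; lia.
rewrite [in index_iota _ p]pE3 big_nat_recl // big_nat_recl // big_nat_recr //=.
have -> : g 0%:R = 0 by rewrite /g expr0n subr0 qchar0.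
have -> : g 1%:R = 0 by rewrite /g expr1n subrr qchar0.
have -> : g (4 * k - 2).+2%:R = 0.
  have -> : ((4 * k - 2).+2%:R : 'F_p) = -1.
    by apply/eqP; rewrite -subr_eq0 opprK natr1 -pE3 pchar_Fp_0.
  by rewrite /g (_ : (-1 : 'F_p) ^+ 3 - -1 = 0) ?qchar0 //; ring.
rewrite add0r add0r addr0 /J -pE big_add1 /=; apply: eq_bigr => i _.
rewrite legendre_qchar /g !natrM -!natr1; congr qchar; ring.
Qed.

Lemma card_S_cone :
  #|[set x : {ffun 'I_6 -> 'F_p} | S_eqs x]|%:R = \sum_(x0 : 'F_p) cone_slice x0 :> int.
Proof.
rewrite card_set_sum sum_ffun6; apply: eq_bigr => x0 _; apply: eq_bigr => x1 _.
apply: eq_bigr => x2 _; rewrite !nsqrt_sum big_distrlr mulr_suml; apply: eq_bigr => x3 _.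
rewrite mulr_suml; apply: eq_bigr => x4 _; rewrite mulr_sumr; apply: eq_bigr => x5 _.
by rewrite /S_eqs !ffunE !(tnth_nth 0) !inordK //= -!natrM !mulnb andbA.
Qed.

Lemma S_count_cubic : (S_count p)%:Z = (p.+1)%:Z ^+ 2 + cubic_sum 'F_p ^+ 2.
Proof.
rewrite /S_count; set Z := [set x : {ffun 'I_6 -> 'F_p} | S_eqs x].
set o : {ffun 'I_6 -> 'F_p} := [ffun=> 0].
have -> : [set x : {ffun 'I_6 -> 'F_p} | [exists i, x i != 0] && S_eqs x] = Z :\ o.
  apply/setP => x; rewrite !inE -negb_forall; congr (~~ _ && _).
  apply/forallP/eqP => [x_eq0 | -> i]; last by rewrite ffunE.
  by apply/ffunP => i; rewrite ffunE; apply/eqP/x_eq0.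
pose K := absz ((p.+1)%:Z ^+ 2 + cubic_sum 'F_p ^+ 2).
have KE : K%:Z = (p.+1)%:Z ^+ 2 + cubic_sum 'F_p ^+ 2.
  by rewrite /K abszE ger0_norm // addr_ge0 ?sqr_ge0.
have card_Z_o : #|Z :\ o| = (p.-1 * K)%N.
  have Zo : o \in Z by rewrite inE /S_eqs !ffunE expr0n subrr !eqxx.
  have := card_S_cone; rewrite (cardsD1 o) Zo (sum_cone_slice Fp_odd Fp_1mod4) card_Fp //.
  rewrite natrD mulr1n => /addrI card_Zo.
  apply/eqP; rewrite -(eqr_nat int) card_Zo natrM [K%:R]natz KE -subn1 natrB ?prime_gt0 //.
  by rewrite natz; exact: eqxx.
by rewrite card_Z_o mulKn // -subn1 subn_gt0 prime_gt1.
Qed.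

End PrimeField.

Theorem lemma4p6 (p k : nat) :
  prime p -> p = (4 * k + 1)%N ->
  ((S_count p)%:Z = (p.+1)%:Z ^+ 2 + (J k) ^+ 2 <->
   ((M_count p)%:Z = (p.+1)%:Z ^+ 2 + ((N_count p)%:Z - p%:Z) ^+ 2 + 1 /\
    (p.+1)%:Z ^+ 2 + ((N_count p)%:Z - p%:Z) ^+ 2 + 1
      = (p.+1)%:Z ^+ 2 + (J k) ^+ 2 + 1)).
Proof.
move=> p_pr pE.
have F_odd := Fp_odd p_pr pE; have F_1mod4 := Fp_1mod4 p_pr pE.
have S_val := S_count_cubic p_pr pE.
have J_val := J_cubic_sum p_pr pE.
have M_val : (M_count p)%:Z = (p.+1)%:Z ^+ 2 + cubic_sum 'F_p ^+ 2 + 1.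
  by rewrite -natz /M_count (card_quartic_surface F_odd F_1mod4) card_Fp // natz.
have N_val : (N_count p)%:Z - p%:Z = cubic_sum 'F_p.
  by rewrite -!natz /N_count (card_cubic F_odd) card_Fp // addrC addKr.
by rewrite S_val M_val N_val J_val.
Qed.
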